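(* Let $A$ be a primitive axial algebra of Jordan type $\eta$ and let $a,b$ be distinct $\eta$-axes with $N=N_{a,b}$ $3$-dimensional. Let $V=N_{b,\,b^{\tau(a)}}$. Then either $V=N$, or $\eta=\tfrac12$, $N$ has an identity element $\mathbf 1$, and exactly one of the following holds: (i) $ab=-\tfrac12\mathbf 1+\tfrac12a+\tfrac12b$, $b\,b^{\tau(a)}=\tfrac12b+\tfrac12b^{\tau(a)}$, $\dim V=2$, and $\mathrm{Span}\{b,b^{\tau(a)}\}\cap\mathrm{Span}\{\mathbf 1,a\}=\mathbb F(\mathbf 1-a)$; (ii) $ab=-\tfrac14\mathbf 1+\tfrac12a+\tfrac12b$, $b\,b^{\tau(a)}=0$, $\dim V=2$, and $\mathrm{Span}\{b,b^{\tau(a)}\}\cap\mathrm{Span}\{\mathbf 1,a\}=\mathbb F\mathbf 1$.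
   Context: Throughout, $\mathbb F$ is a field of characteristic $\neq 2$ and $\eta\in\mathbb F\setminus\{0,1\}$. Let $A$ be a commutative, not necessarily associative $\mathbb F$-algebra. For $a\in A$ and $\lambda\in\mathbb F$ put $A_\lambda(a)=\{x\in A: xa=\lambda x\}$. An $\eta$-axis of $A$ is an element $a$ with $a^2=a$ such that $A=A_1(a)\oplus A_0(a)\oplus A_\eta(a)$, $A_1(a)=\mathbb F a$, and, writing $A_+(a)=A_1(a)\oplus A_0(a)$ and $A_-(a)=A_\eta(a)$, one has $A_+(a)A_+(a)\subseteq A_+(a)$, $A_+(a)A_-(a)\subseteq A_-(a)$, $A_-(a)A_-(a)\subseteq A_+(a)$ and $A_0(a)A_0(a)\subseteq A_0(a)$. $A$ is a primitive axial algebra of Jordan type $\eta$ if it is generated by $\eta$-axes. The Miyamoto involution $\tau(a)$ acts as $1$ on $A_+(a)$ and $-1$ on $A_-(a)$. $N_{x,y}$ is the subalgebra generated by $x,y$; an identity element of a subalgebra $N$ is $\mathbf 1\in N$ with $\mathbf 1n=n$ for all $n\in N$. *)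

(* A commutative non-associative F-algebra is modelled as an
   F-vector space V : lmodType F together with a commutative bilinear product. *)
From HB Require Import structures.
From mathcomp Require Import all_boot all_order all_algebra.
Set Implicit Arguments. Unset Strict Implicit. Unset Printing Implicit Defensive.
Import Order.TTheory GRing.Theory.
Local Open Scope ring_scope.

Section AxialDefs.
Variables (F : fieldType) (V : lmodType F) (mul : V -> V -> V).

(* commutative, bilinear product (linearity in the first argument follows) *)
Definition comm_bilinear : Prop :=
  (forall x y, mul x y = mul y x) /\
  (forall (k : F) x y z, mul x (k *: y + z) = k *: mul x y + mul x z).

Definition eigen (a : V) (l : F) (x : V) : Prop := mul x a = l *: x.

Definition Aplus (a : V) (x : V) : Prop :=
  exists x1 x0, eigen a 1 x1 /\ eigen a 0 x0 /\ x = x1 + x0.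

Definition is_axis (eta : F) (a : V) : Prop :=
  [/\ mul a a = a,
      (forall x, exists x1 x0 xe,
          [/\ eigen a 1 x1, eigen a 0 x0, eigen a eta xe & x = x1 + x0 + xe]),
      (forall x1 x0 xe, eigen a 1 x1 -> eigen a 0 x0 -> eigen a eta xe ->
          x1 + x0 + xe = 0 -> [/\ x1 = 0, x0 = 0 & xe = 0]),
      (forall x, eigen a 1 x <-> exists k : F, x = k *: a) &
      [/\ (forall x y, Aplus a x -> Aplus a y -> Aplus a (mul x y)),
          (forall x y, Aplus a x -> eigen a eta y -> eigen a eta (mul x y)),
          (forall x y, eigen a eta x -> eigen a eta y -> Aplus a (mul x y)) &
          (forall x y, eigen a 0 x -> eigen a 0 y -> eigen a 0 (mul x y))]].

Definition subalg_closed (S : V -> Prop) : Prop :=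
  [/\ S 0, (forall x y, S x -> S y -> S (x + y)),
      (forall (k : F) x, S x -> S (k *: x)) &
      (forall x y, S x -> S y -> S (mul x y))].

Definition gen (X : V -> Prop) (z : V) : Prop :=
  forall S : V -> Prop, subalg_closed S -> (forall x, X x -> S x) -> S z.

Definition N2 (x y : V) : V -> Prop := gen (fun z => z = x \/ z = y).

Definition primitive_axial_Jordan (eta : F) : Prop :=
  comm_bilinear /\ forall z, gen (is_axis eta) z.

(* c = b^{tau(a)}: tau(a) is 1 on A_+(a) and -1 on A_-(a) = A_eta(a) *)
Definition tau_image (eta : F) (a b c : V) : Prop :=
  exists bp bm, [/\ Aplus a bp, eigen a eta bm, b = bp + bm & c = bp - bm].

Definition is_identity (N : V -> Prop) (one : V) : Prop :=
  N one /\ forall n, N n -> mul one n = n.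

End AxialDefs.

Section LinDefs.
Variables (F : fieldType) (V : lmodType F).

Definition span_of (s : seq V) (z : V) : Prop :=
  exists c : 'I_(size s) -> F, z = \sum_(i < size s) c i *: s`_i.

Definition lin_free (s : seq V) : Prop :=
  forall c : 'I_(size s) -> F,
    \sum_(i < size s) c i *: s`_i = 0 -> forall i, c i = 0.

Definition has_dim (P : V -> Prop) (n : nat) : Prop :=
  exists s : seq V, [/\ size s = n, lin_free s & forall z, P z <-> span_of s z].

End LinDefs.

(* Decompose b along the eigenspaces of the axis a: b = phi a + b0 + be with
   b0 in A_0(a) and be in A_eta(a).  As N_{a,b} is 3-dimensional, a, b0, be is a
   basis of it and b0^2 = nu b0; the fusion rules and b^2 = b then give the
   whole multiplication table of N_{a,b} in terms of eta, phi and nu.  Running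
   the same argument with a and b exchanged forces the two values of phi to
   agree and yields two polynomial relations between eta, phi and nu.
   In this basis b^tau(a) = phi a + b0 - be and
   b b^tau(a) = (2 phi^2 - phi) a + (2 nu - 1) b0, so a lies in N_{b,b^tau(a)}
   unless phi (nu - phi) = 0.  In that degenerate case the relations force
   eta = 1/2, nu = 1 - phi and phi in {0, 1/2}; the two values of phi give the
   alternatives (i) and (ii), the identity of N_{a,b} being a + nu^-1 b0. *)

From Pilot Require Import Defs.
From HB Require Import structures.
From mathcomp Require Import all_boot all_order all_algebra ring.
Import Order.TTheory GRing.Theory.
Local Open Scope ring_scope.
Set Implicit Arguments. Unset Strict Implicit. Unset Printing Implicit Defensive.

Section LinearAlgebra.
Variables (F : fieldType) (V : lmodType F).

Lemma span_dependent (s t : seq V) :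
  (size s < size t)%N -> (forall i : 'I_(size t), span_of s t`_i) ->
  exists c : 'I_(size t) -> F,
    (exists i, c i != 0) /\ \sum_(i < size t) c i *: t`_i = 0.
Proof.
move=> lt_st t_in_s.
have [M defM] : exists M : 'M[F]_(size t, size s),
    forall i : 'I_(size t), t`_i = \sum_(j < size s) M i j *: s`_j.
  have [f deff] := fin_all_exists t_in_s.
  by exists (\matrix_(i, j) f i j) => i; rewrite deff; apply: eq_bigr => j _; rewrite mxE.
have /matrix0Pn[i [j Kij]] : kermx M != 0.
  rewrite kermx_eq0 /row_free; apply: contraTneq lt_st => rkM.
  by rewrite -leqNgt -rkM rank_leq_col.
exists (kermx M i); split; first by exists j.
have KM0 : row i (kermx M) *m M = 0 by rewrite -row_mul mulmx_ker row0.
under eq_bigr => k _ do rewrite defM scaler_sumr.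
rewrite exchange_big big1 //= => l _.
under eq_bigr => k _ do rewrite scalerA.
rewrite -scaler_suml (_ : \sum_k _ = (row i (kermx M) *m M) 0 l).
  by rewrite KM0 mxE scale0r.
by rewrite !mxE; apply: eq_bigr => k _; rewrite !mxE.
Qed.

Section Comb3.
Variables u v w : V.

Fact comb3_key : unit. Proof. exact: tt. Qed.
Definition comb3 (p q r : F) : V :=
  locked_with comb3_key (p *: u + q *: v + r *: w).

Lemma comb3E p q r : comb3 p q r = p *: u + q *: v + r *: w.
Proof. by rewrite /comb3 unlock. Qed.

Lemma comb3D p q r p' q' r' :
  comb3 p q r + comb3 p' q' r' = comb3 (p + p') (q + q') (r + r').
Proof. by rewrite !comb3E !scalerDl addrACA [X in X + _]addrACA. Qed.

Lemma comb3Z k p q r : k *: comb3 p q r = comb3 (k * p) (k * q) (k * r).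
Proof. by rewrite !comb3E !scalerDr !scalerA. Qed.

Lemma comb3N p q r : - comb3 p q r = comb3 (- p) (- q) (- r).
Proof. by rewrite -scaleN1r comb3Z !mulN1r. Qed.

Lemma comb3B p q r p' q' r' :
  comb3 p q r - comb3 p' q' r' = comb3 (p - p') (q - q') (r - r').
Proof. by rewrite comb3N comb3D. Qed.

Lemma comb30 : comb3 0 0 0 = 0.
Proof. by rewrite comb3E !scale0r !addr0. Qed.

Lemma comb3_congr p q r p' q' r' :
  p = p' -> q = q' -> r = r' -> comb3 p q r = comb3 p' q' r'.
Proof. by move=> -> -> ->. Qed.

Lemma comb3_u : u = comb3 1 0 0.
Proof. by rewrite comb3E scale1r !scale0r !addr0. Qed.
Lemma comb3_v : v = comb3 0 1 0.
Proof. by rewrite comb3E scale1r !scale0r add0r addr0. Qed.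
Lemma comb3_w : w = comb3 0 0 1.
Proof. by rewrite comb3E scale1r !scale0r !add0r. Qed.

Lemma comb3_uZ k : k *: u = comb3 k 0 0.
Proof. by rewrite comb3E !scale0r !addr0. Qed.

Definition span3 (z : V) : Prop := exists p q r, z = comb3 p q r.

Lemma span3_comb3 p q r : span3 (comb3 p q r).
Proof. by exists p, q, r. Qed.

Lemma span3_u : span3 u. Proof. by rewrite comb3_u; apply: span3_comb3. Qed.
Lemma span3_v : span3 v. Proof. by rewrite comb3_v; apply: span3_comb3. Qed.
Lemma span3_w : span3 w. Proof. by rewrite comb3_w; apply: span3_comb3. Qed.
Lemma span30 : span3 0. Proof. by rewrite -comb30; apply: span3_comb3. Qed.

Lemma span3D x y : span3 x -> span3 y -> span3 (x + y).
Proof. by move=> [p [q [r ->]]] [p' [q' [r' ->]]]; rewrite comb3D; apply: span3_comb3. Qed.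

Lemma span3Z k x : span3 x -> span3 (k *: x).
Proof. by move=> [p [q [r ->]]]; rewrite comb3Z; apply: span3_comb3. Qed.

Lemma span_of3 z : span_of [:: u; v; w] z <-> span3 z.
Proof.
split=> [[c ->]|[p [q [r ->]]]].
  by rewrite !big_ord_recr big_ord0 /= add0r -comb3E; apply: span3_comb3.
exists (fun i => [:: p; q; r]`_i).
by rewrite comb3E !big_ord_recr big_ord0 /= add0r.
Qed.

Definition free3 : Prop := forall p q r, comb3 p q r = 0 -> [/\ p = 0, q = 0 & r = 0].

Lemma comb3_inj : free3 ->
  forall p q r p' q' r', comb3 p q r = comb3 p' q' r' -> [/\ p = p', q = q' & r = r'].
Proof.
move=> free p q r p' q' r' /eqP; rewrite -subr_eq0 comb3B => /eqP/free[].
by move=> /subr0_eq -> /subr0_eq -> /subr0_eq ->.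
Qed.

End Comb3.

Lemma span_of2 (u v z : V) : span_of [:: u; v] z <-> exists k l, z = k *: u + l *: v.
Proof.
split=> [[c ->]|[k [l ->]]].
  by rewrite !big_ord_recr big_ord0 /= add0r; do 2!eexists.
by exists (fun i => [:: k; l]`_i); rewrite !big_ord_recr big_ord0 /= add0r.
Qed.

Lemma span_of2_comb3 (u v w : V) p q r p' q' r' z :
  span_of [:: comb3 u v w p q r; comb3 u v w p' q' r'] z <->
  exists k l, z = comb3 u v w (k * p + l * p') (k * q + l * q') (k * r + l * r').
Proof.
by rewrite span_of2; split=> [[k [l ->]]|[k [l ->]]]; exists k, l; rewrite !comb3Z comb3D.
Qed.

Lemma span3_w0 (u v z : V) : span3 u v 0 z -> span_of [:: u; v] z.
Proof. by move=> [p [q [r ->]]]; apply/span_of2; exists p, q; rewrite comb3E scaler0 addr0. Qed.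

Lemma lin_free2 (u v : V) :
  (forall k l, k *: u + l *: v = 0 -> k = 0 /\ l = 0) -> lin_free [:: u; v].
Proof.
move=> free c; rewrite !big_ord_recr big_ord0 /= add0r => /free[c0 c1].
by case=> [[|[|i]] lti] //; [rewrite -c0 | rewrite -c1]; congr c; apply: val_inj.
Qed.

Lemma has_dim_ext (P Q : V -> Prop) n :
  (forall z, P z <-> Q z) -> has_dim P n -> has_dim Q n.
Proof. by move=> PQ [s [sz free defP]]; exists s; split=> // z; rewrite -PQ. Qed.

Section Dim3.
Variable P : V -> Prop.
Hypothesis dimP : has_dim P 3.

Lemma has_dim3_basis : exists t0 t1 t2,
  [/\ lin_free [:: t0; t1; t2], forall z, P z <-> span3 t0 t1 t2 z, P t0, P t1 & P t2].
Proof.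
case: dimP => s [sz3 free defP].
case: s sz3 free defP => [|t0 [|t1 [|t2 [|? ?]]]] //= _ free defP.
have defP3 z : P z <-> span3 t0 t1 t2 z.
  by split=> [/defP/span_of3 | /span_of3/defP].
exists t0, t1, t2; split=> //.
- by apply/defP3; exists 1, 0, 0; apply: comb3_u.
- by apply/defP3; exists 0, 1, 0; apply: comb3_v.
- by apply/defP3; exists 0, 0, 1; apply: comb3_w.
Qed.

Lemma has_dim3_not_sub_span2 (u v : V) : ~ (forall z, P z -> span_of [:: u; v] z).
Proof.
move=> sub_uv; have [t0 [t1 [t2 [free _ Pt0 Pt1 Pt2]]]] := has_dim3_basis.
have [] := @span_dependent [:: u; v] [:: t0; t1; t2] isT.
  by case=> [[|[|[|i]]] lti] //=; apply: sub_uv.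
by move=> c [[i ci] /free c0]; rewrite c0 eqxx in ci.
Qed.

Lemma has_dim3_dependent4 x0 x1 x2 x3 : P x0 -> P x1 -> P x2 -> P x3 ->
  exists c0 c1 c2 c3 : F, (~ [/\ c0 = 0, c1 = 0, c2 = 0 & c3 = 0]) /\
    c0 *: x0 + c1 *: x1 + c2 *: x2 + c3 *: x3 = 0.
Proof.
move=> Px0 Px1 Px2 Px3; have [t0 [t1 [t2 [_ defP _ _ _]]]] := has_dim3_basis.
have [] := @span_dependent [:: t0; t1; t2] [:: x0; x1; x2; x3] isT.
  by case=> [[|[|[|[|i]]]] lti] //=; apply/span_of3/defP.
move=> c [[i ci]]; rewrite !big_ord_recr big_ord0 /= add0r => sum0.
do 4!eexists; split; last exact: sum0.
case=> c0 c1 c2 c3; move/eqP: ci; apply.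
case: i => [[|[|[|[|i]]]] lti] //.
- by rewrite -c0; congr c; apply: val_inj.
- by rewrite -c1; congr c; apply: val_inj.
- by rewrite -c2; congr c; apply: val_inj.
- by rewrite -c3; congr c; apply: val_inj.
Qed.

End Dim3.

End LinearAlgebra.

Section FieldFacts.
Variable F : fieldType.

Lemma eq_by_scaled_eq (c x y x' y' : F) : x' = y' -> x - y = c * (x' - y') -> x = y.
Proof. by move=> e' exy; apply/eqP; rewrite -subr_eq0 exy e' subrr mulr0. Qed.

Lemma degenerate_parameters (eta phi nu : F) : eta != 0 -> 2 != 0 :> F ->
  eta * (1 - nu) = phi * (1 - eta) ->
  phi * eta + eta / 2 = eta ^+ 2 + phi * (1 - eta) ->
  phi * (nu - phi) = 0 -> [/\ eta = 2^-1, nu = 1 - phi & phi = 0 \/ phi = 2^-1].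
Proof.
move=> eta_neq0 two_neq0 r2 r3 deg.
have : (2 * eta - 1) * (phi - eta / 2) = 0.
  by apply: (eq_by_scaled_eq (c := 1) r3); field.
move/eqP; rewrite mulf_eq0 !subr_eq0 => /orP[/eqP e|/eqP e]; last first.
  have nuE : nu = 1 - (1 - eta) / 2.
    by apply: (mulfI eta_neq0); rewrite e in r2; apply: (eq_by_scaled_eq (c := -1) r2); field.
  move: deg; rewrite nuE e (_ : 1 - (1 - eta) / 2 - eta / 2 = 2^-1); last by field.
  by move/eqP; rewrite !mulf_eq0 invr_eq0 (negPf eta_neq0) (negPf two_neq0).
have etaE : eta = 2^-1 by apply: (mulfI two_neq0); rewrite e mulfV.
have nuE : nu = 1 - phi.
  by rewrite etaE in r2; apply: (eq_by_scaled_eq (c := -2) r2); field.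
split=> //; move/eqP: deg; rewrite nuE mulf_eq0 => /orP[/eqP|/eqP half]; first by left.
by right; apply: (eq_by_scaled_eq (c := - 2^-1) half); field.
Qed.

End FieldFacts.

Section Subalgebras.
Variables (F : fieldType) (A : lmodType F) (mul : A -> A -> A).

Lemma gen_subalg_closed X : Defs.subalg_closed mul (gen mul X).
Proof.
split=> [S [] // | x y gx gy S SS SX | k x gx S SS SX | x y gx gy S SS SX];
  case: (SS) => _ SD SZ SM; [apply: SD | apply: SZ | apply: SM]; by [apply: gx | apply: gy].
Qed.

Lemma gen_in (X : A -> Prop) x : X x -> gen mul X x.
Proof. by move=> Xx S _; apply. Qed.

Lemma subalg_closed_comb2 S k l x y :
  Defs.subalg_closed mul S -> S x -> S y -> S (k *: x + l *: y).
Proof. by case=> _ SD SZ _ Sx Sy; apply: SD; apply: SZ. Qed.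

Lemma subalg_closedB S x y : Defs.subalg_closed mul S -> S x -> S y -> S (x - y).
Proof. by move=> SS Sx Sy; rewrite -[x]scale1r -scaleN1r; apply: subalg_closed_comb2. Qed.

Lemma N2_l x y : N2 mul x y x. Proof. by apply: gen_in; left. Qed.
Lemma N2_r x y : N2 mul x y y. Proof. by apply: gen_in; right. Qed.

Lemma N2_min S x y z : Defs.subalg_closed mul S -> S x -> S y -> N2 mul x y z -> S z.
Proof. by move=> SS Sx Sy; apply; last by move=> _ [->|->]. Qed.

Lemma N2C x y z : N2 mul y x z <-> N2 mul x y z.
Proof. by split; apply: N2_min; by [apply: gen_subalg_closed | apply: N2_l | apply: N2_r]. Qed.

End Subalgebras.

Section Algebra.
Variables (F : fieldType) (A : lmodType F) (mul : A -> A -> A).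
Hypothesis mulC : forall x y, mul x y = mul y x.
Hypothesis mulL : forall (k : F) x y z, mul x (k *: y + z) = k *: mul x y + mul x z.

Lemma mulv0 x : mul x 0 = 0.
Proof.
have := mulL 1 x 0 0; rewrite scaler0 add0r scale1r => h.
by apply: (addrI (mul x 0)); rewrite addr0 -h.
Qed.

Lemma mul0v x : mul 0 x = 0.
Proof. by rewrite mulC mulv0. Qed.

Lemma mulvD x y z : mul x (y + z) = mul x y + mul x z.
Proof. by have := mulL 1 x y z; rewrite !scale1r. Qed.

Lemma mulDv x y z : mul (y + z) x = mul y x + mul z x.
Proof. by rewrite mulC mulvD !(mulC x). Qed.

Lemma mulvZ k x y : mul x (k *: y) = k *: mul x y.
Proof. by rewrite -[k *: y]addr0 mulL mulv0 addr0. Qed.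

Lemma mulZv k x y : mul (k *: y) x = k *: mul y x.
Proof. by rewrite mulC mulvZ mulC. Qed.

Lemma mul_sqD x y : mul (x + y) (x + y) = (mul x x + mul y y) + (mul x y + mul x y).
Proof. by rewrite mulvD !mulDv (mulC y x) [mul x y + mul y y]addrC addrACA. Qed.

Lemma mul_comb3l u v w p q r y :
  mul (comb3 u v w p q r) y = p *: mul u y + q *: mul v y + r *: mul w y.
Proof. by rewrite comb3E !mulDv !mulZv. Qed.

Lemma mul_comb3r u v w p q r y :
  mul y (comb3 u v w p q r) = p *: mul y u + q *: mul y v + r *: mul y w.
Proof. by rewrite comb3E !mulvD !mulvZ. Qed.

Lemma span3_subalg_closed u v w :
  span3 u v w (mul u u) -> span3 u v w (mul u v) -> span3 u v w (mul u w) ->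
  span3 u v w (mul v v) -> span3 u v w (mul v w) -> span3 u v w (mul w w) ->
  Defs.subalg_closed mul (span3 u v w).
Proof.
move=> uu uv uw vv vw ww.
have span3_comb x y z p q r : span3 u v w x -> span3 u v w y -> span3 u v w z ->
    span3 u v w (p *: x + q *: y + r *: z).
  by move=> Sx Sy Sz; do 2?apply: span3D; apply: span3Z.
split; [by exists 0, 0, 0; rewrite comb30 | exact: span3D | exact: span3Z |].
move=> x y [p [q [r ->]]] [p' [q' [r' ->]]].
by rewrite mul_comb3l !mul_comb3r; apply: (span3_comb); apply: (span3_comb); rewrite // mulC.
Qed.

Section Axis.
Variables (eta : F) (a : A).
Hypothesis axis_a : is_axis mul eta a.

Lemma eigenD l x y : eigen mul a l x -> eigen mul a l y -> eigen mul a l (x + y).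
Proof. by rewrite /eigen mulDv => -> ->; rewrite scalerDr. Qed.

Lemma eigenZ l k x : eigen mul a l x -> eigen mul a l (k *: x).
Proof. by rewrite /eigen mulZv => ->; rewrite !scalerA mulrC. Qed.

Lemma eigenB l x y : eigen mul a l x -> eigen mul a l y -> eigen mul a l (x - y).
Proof. by move=> ex ey; rewrite -scaleN1r; apply: eigenD => //; apply: eigenZ. Qed.

Lemma AplusD x y : Aplus mul a x -> Aplus mul a y -> Aplus mul a (x + y).
Proof.
move=> [x1 [x0 [ex1 [ex0 ->]]]] [y1 [y0 [ey1 [ey0 ->]]]].
exists (x1 + y1), (x0 + y0).
by split; [exact: eigenD | split; [exact: eigenD | rewrite addrACA]].
Qed.

Lemma AplusZ k x : Aplus mul a x -> Aplus mul a (k *: x).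
Proof.
move=> [x1 [x0 [ex1 [ex0 ->]]]].
exists (k *: x1), (k *: x0).
by split; [exact: eigenZ | split; [exact: eigenZ | rewrite scalerDr]].
Qed.

Lemma AplusB x y : Aplus mul a x -> Aplus mul a y -> Aplus mul a (x - y).
Proof. by move=> px py; rewrite -scaleN1r; apply: AplusD => //; apply: AplusZ. Qed.

Lemma Aplus_eigen_direct p e :
  Aplus mul a p -> eigen mul a eta e -> p + e = 0 -> p = 0 /\ e = 0.
Proof.
case: axis_a => _ _ direct _ _ [p1 [p0 [ep1 [ep0 ->]]]] ee sum0.
by have [-> -> ->] := direct _ _ _ ep1 ep0 ee sum0; rewrite addr0.
Qed.

Lemma Aplus_eigen_uniq p e p' e' : Aplus mul a p -> eigen mul a eta e ->
  Aplus mul a p' -> eigen mul a eta e' -> p + e = p' + e' -> p = p' /\ e = e'.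
Proof.
move=> pp ee pp' ee' eq_sum.
have [] := @Aplus_eigen_direct (p - p') (e - e').
- exact: AplusB.
- exact: eigenB.
- by rewrite addrACA eq_sum addrACA !subrr addr0.
by move=> /subr0_eq -> /subr0_eq ->.
Qed.

Lemma Aplus_axis_zero k x0 : eigen mul a 0 x0 -> Aplus mul a (k *: a + x0).
Proof.
move=> ex0; exists (k *: a), x0; split=> //.
by case: axis_a => aa _ _ _ _; rewrite /eigen mulZv aa scale1r.
Qed.

Lemma axis_decomposition x : exists phi x0 xe,
  [/\ eigen mul a 0 x0, eigen mul a eta xe & x = phi *: a + x0 + xe].
Proof.
case: axis_a => _ decomp _ A1 _.
have [x1 [x0 [xe [ex1 ex0 exe ->]]]] := decomp x.
by have [phi ->] := (A1 x1).1 ex1; exists phi, x0, xe.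
Qed.

Lemma axis_free3 x0 xe : a != 0 -> x0 != 0 -> xe != 0 ->
  eigen mul a 0 x0 -> eigen mul a eta xe -> free3 a x0 xe.
Proof.
move=> a_neq0 x0_neq0 xe_neq0 ex0 exe p q r.
case: axis_a => aa _ direct _ _.
have ea : eigen mul a 1 a by rewrite /eigen aa scale1r.
rewrite comb3E => /(direct _ _ _ (eigenZ p ea) (eigenZ q ex0) (eigenZ r exe)).
by case=> /eqP + /eqP + /eqP; rewrite !scaler_eq0 (negPf a_neq0) (negPf x0_neq0)
  (negPf xe_neq0) !orbF => /eqP -> /eqP -> /eqP ->.
Qed.

End Axis.

Record axis_table (eta phi nu : F) (a b b0 be : A) : Prop := AxisTable {
  table_b : b = comb3 a b0 be phi 1 1;
  table_aa : mul a a = a;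
  table_ab0 : mul a b0 = 0;
  table_abe : mul a be = eta *: be;
  table_b0b0 : mul b0 b0 = nu *: b0;
  table_b0be : mul b0 be = (2^-1 - phi * eta) *: be;
  table_bebe : mul be be = (phi - phi ^+ 2) *: a + (1 - nu) *: b0;
  table_free : free3 a b0 be;
  table_N2 : forall z, N2 mul a b z <-> span3 a b0 be z }.

Section IdempotentDecomposition.
Variables (eta phi : F) (a b b0 be : A).
Hypotheses (eta_neq0 : eta != 0) (two_neq0 : 2 != 0 :> F).
Hypotheses (axis_a : is_axis mul eta a) (bb : mul b b = b).
Hypotheses (b0_0 : eigen mul a 0 b0) (be_eta : eigen mul a eta be).
Hypothesis defb : b = phi *: a + b0 + be.

Let aa : mul a a = a. Proof. by case: axis_a. Qed.
Let ab0 : mul a b0 = 0. Proof. by rewrite mulC b0_0 scale0r. Qed.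
Let abe : mul a be = eta *: be. Proof. by rewrite mulC be_eta. Qed.

Lemma mul_a_idempotent : mul a b = phi *: a + eta *: be.
Proof. by rewrite defb !mulvD mulvZ aa ab0 abe addr0. Qed.

Lemma idempotent_fusion :
  mul b0 be = (2^-1 - phi * eta) *: be /\
  mul be be = (phi - phi ^+ 2) *: a + b0 - mul b0 b0.
Proof.
case: (axis_a) => _ _ _ _ [fusion_pp fusion_pe fusion_ee _].
set p := phi *: a + b0; have defbp : b = p + be := defb.
have pp : mul p p = phi ^+ 2 *: a + mul b0 b0.
  rewrite mulvD !mulDv !mulvZ !mulZv aa ab0 (mulC b0 a) ab0.
  by rewrite !scaler0 !addr0 add0r scalerA -expr2.
have pbe : mul p be = (phi * eta) *: be + mul b0 be.
  by rewrite mulDv mulZv (mulC a be) be_eta scalerA.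
(* Compare the components of b^2 = b in A_+(a) and A_eta(a): by the fusion
   rules p^2 + be^2 lies in A_+(a) and 2 p be in A_eta(a). *)
have Ap : Aplus mul a p by apply: (Aplus_axis_zero axis_a).
have [plus_part eta_part] : mul p p + mul be be = p /\ mul p be + mul p be = be.
  apply: (Aplus_eigen_uniq axis_a) => //.
  - by apply: AplusD; [apply: fusion_pp | apply: fusion_ee].
  - by apply: eigenD; apply: fusion_pe.
  by rewrite -defbp -bb defbp (mul_sqD p be).
split; last first.
  have -> : mul be be = p - mul p p.
    by apply/eqP; rewrite eq_sym subr_eq addrC plus_part.
  by rewrite pp /p opprD addrACA scalerBl addrA.
have := congr1 (fun x => 2^-1 *: x) eta_part.
rewrite /= -mulr2n -scaler_nat scalerA mulVf // scale1r pbe => half.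
by rewrite scalerBl -half addrAC subrr add0r.
Qed.

Hypothesis dimN : has_dim (N2 mul a b) 3.

Lemma N2_idempotent_parts : N2 mul a b b0 /\ N2 mul a b be.
Proof.
have SN := gen_subalg_closed mul (fun z => z = a \/ z = b).
have [_ _ NZ NM] := SN; have Na : N2 mul a b a by apply: N2_l.
have Nb : N2 mul a b b by apply: N2_r.
have Nbe : N2 mul a b be.
  have -> : be = eta^-1 *: (mul a b - phi *: a).
    by rewrite mul_a_idempotent addrAC subrr add0r scalerA mulVf // scale1r.
  by apply: (NZ); apply: (subalg_closedB SN) => //; [apply: (NM) | apply: (NZ)].
split=> //; have -> : b0 = b - phi *: a - be by rewrite defb [phi *: a + b0]addrC addrAC !addrK.
by do 2!apply: (subalg_closedB SN) => //; apply: (NZ).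
Qed.

Lemma eta_part_neq0 : be != 0.
Proof.
apply/eqP => be0; apply: (has_dim3_not_sub_span2 dimN (u := a) (v := b)) => z Nz.
apply: span3_w0; apply: N2_min Nz; [apply: span3_subalg_closed | apply: span3_u | apply: span3_v].
- by rewrite aa; apply: span3_u.
- by rewrite mul_a_idempotent be0 scaler0 addr0; apply/span3Z/span3_u.
- by rewrite mulv0; apply: span30.
- by rewrite bb; apply: span3_v.
- by rewrite mulv0; apply: span30.
- by rewrite mulv0; apply: span30.
Qed.

Lemma axis_neq0 : a != 0.
Proof.
apply: contraNneq eta_part_neq0 => a0; apply/eqP.
by move: abe; rewrite a0 mul0v => /esym/eqP; rewrite scaler_eq0 (negPf eta_neq0) => /eqP.
Qed.

Lemma zero_part_neq0 : b0 != 0.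
Proof.
apply/eqP => b00; apply: (has_dim3_not_sub_span2 dimN (u := a) (v := be)) => z Nz.
have bebe : mul be be = (phi - phi ^+ 2) *: a.
  by have [_ ->] := idempotent_fusion; rewrite b00 mulv0 !subr0 addr0.
apply: span3_w0; apply: N2_min Nz; [apply: span3_subalg_closed | apply: span3_u | ].
- by rewrite aa; apply: span3_u.
- by rewrite abe; apply/span3Z/span3_v.
- by rewrite mulv0; apply: span30.
- by rewrite bebe; apply/span3Z/span3_u.
- by rewrite mulv0; apply: span30.
- by rewrite mulv0; apply: span30.
by rewrite defb b00 addr0; apply: span3D; [apply/span3Z/span3_u | apply: span3_v].
Qed.

Lemma zero_part_sq : exists nu, mul b0 b0 = nu *: b0.
Proof.
(* a, b0, be and b0^2 are dependent in N_{a,b}; since b0^2 lies in A_0(a), the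
   directness of the eigenspace sum confines the dependence to b0 and b0^2. *)
case: (axis_a) => _ _ direct _ [_ _ _ fusion_00].
have [Nb0 Nbe] := N2_idempotent_parts.
have [_ _ _ NM] := gen_subalg_closed mul (fun z => z = a \/ z = b).
have [c0 [c1 [c2 [c3 [not0 sum0]]]]] :=
  has_dim3_dependent4 dimN (N2_l (x := a) (y := b)) Nb0 Nbe (NM _ _ Nb0 Nb0).
have ea : eigen mul a 1 a by rewrite /eigen aa scale1r.
have [] := direct (c0 *: a) (c1 *: b0 + c3 *: mul b0 b0) (c2 *: be).
- exact: eigenZ.
- by apply: eigenD; apply: eigenZ => //; apply: fusion_00.
- exact: eigenZ.
- by rewrite -sum0 -!addrA [c2 *: _ + _]addrC.
move=> /eqP + sum00 /eqP; rewrite !scaler_eq0 (negPf axis_neq0) (negPf eta_part_neq0) !orbF.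
move=> /eqP c00 /eqP c20.
have c3_neq0 : c3 != 0.
  apply: contra_notN not0 => /eqP c30; split=> //.
  move: sum00; rewrite c30 scale0r addr0 => /eqP.
  by rewrite scaler_eq0 (negPf zero_part_neq0) orbF => /eqP.
exists (- (c1 / c3)); apply: (scalerI c3_neq0).
rewrite scalerA mulrN mulrCA divff // mulr1 scaleNr.
by apply/eqP; rewrite -addr_eq0 addrC sum00.
Qed.

Lemma N2_idempotent_span3 nu : mul b0 b0 = nu *: b0 ->
  forall z, N2 mul a b z <-> span3 a b0 be z.
Proof.
move=> b0b0 z; split=> [|[p [q [r ->]]]]; last first.
  have [Nb0 Nbe] := N2_idempotent_parts.
  have [_ ND NZ _] := gen_subalg_closed mul (fun z => z = a \/ z = b).
  by rewrite comb3E; apply: (ND); [apply: (ND)|]; apply: (NZ) => //; apply: N2_l.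
apply: N2_min; [apply: span3_subalg_closed | apply: span3_u |].
- by rewrite aa; apply: span3_u.
- by rewrite ab0; apply: span30.
- by rewrite abe; apply/span3Z/span3_w.
- by rewrite b0b0; apply/span3Z/span3_v.
- by have [-> _] := idempotent_fusion; apply/span3Z/span3_w.
- have [_ ->] := idempotent_fusion; rewrite b0b0 -scaleNr.
  apply: span3D; last exact/span3Z/span3_v.
  by apply: span3D; [apply/span3Z/span3_u | apply: span3_v].
rewrite defb; apply: span3D; last exact: span3_w.
by apply: span3D; [apply/span3Z/span3_u | apply: span3_v].
Qed.

Lemma idempotent_axis_table : exists nu, axis_table eta phi nu a b b0 be.
Proof.
have [nu b0b0] := zero_part_sq; have [b0be bebe] := idempotent_fusion.
exists nu; split=> //.
- by rewrite defb comb3E !scale1r.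
- by rewrite bebe b0b0 [(1 - nu) *: _]scalerBl scale1r addrA.
- apply: axis_free3 b0_0 be_eta => //.
  + exact: axis_neq0.
  + exact: zero_part_neq0.
  + exact: eta_part_neq0.
exact: N2_idempotent_span3 b0b0.
Qed.

End IdempotentDecomposition.

Lemma axis_table_exists eta a b : eta != 0 -> 2 != 0 :> F ->
  is_axis mul eta a -> mul b b = b -> has_dim (N2 mul a b) 3 ->
  exists phi nu b0 be, axis_table eta phi nu a b b0 be.
Proof.
move=> eta_neq0 two_neq0 axis_a bb dimN.
have [phi [b0 [be [b0_0 be_eta defb]]]] := axis_decomposition axis_a b.
have [nu tab] := idempotent_axis_table eta_neq0 two_neq0 axis_a bb b0_0 be_eta defb dimN.
by exists phi, nu, b0, be.
Qed.

Section Table.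
Variables (eta phi nu : F) (a b b0 be : A).
Hypothesis T : axis_table eta phi nu a b b0 be.

Local Notation comb := (comb3 a b0 be).

Lemma table_mul p q r p' q' r' :
  mul (comb p q r) (comb p' q' r') =
  comb (p * p' + (phi - phi ^+ 2) * (r * r'))
       (nu * (q * q') + (1 - nu) * (r * r'))
       (eta * (p * r' + r * p') + (2^-1 - phi * eta) * (q * r' + r * q')).
Proof.
case: T => _ aa ab0 abe b0b0 b0be bebe _ _.
rewrite mul_comb3l !mul_comb3r (mulC b0 a) (mulC be a) (mulC be b0).
have -> : mul a a = comb 1 0 0 by rewrite aa -comb3_u.
have -> : mul a b0 = comb 0 0 0 by rewrite ab0 comb30.
have -> : mul a be = comb 0 0 eta by rewrite abe comb3E !scale0r !add0r.
have -> : mul b0 b0 = comb 0 nu 0 by rewrite b0b0 comb3E !scale0r addr0 add0r.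
have -> : mul b0 be = comb 0 0 (2^-1 - phi * eta) by rewrite b0be comb3E !scale0r !add0r.
have -> : mul be be = comb (phi - phi ^+ 2) (1 - nu) 0 by rewrite bebe comb3E scale0r addr0.
by rewrite !(comb3Z, comb3D); apply: comb3_congr; ring.
Qed.

Lemma table_inj p q r p' q' r' :
  comb p q r = comb p' q' r' -> [/\ p = p', q = q' & r = r'].
Proof. by apply: comb3_inj; apply: table_free T. Qed.

Lemma table_ab : mul a b = comb phi 0 eta.
Proof.
rewrite (table_b T) -[a in mul a _]scale1r (comb3_uZ a b0 be) table_mul.
by apply: comb3_congr; ring.
Qed.

Lemma mul_a_ab : mul a (mul a b) = eta *: mul a b + (phi * (1 - eta)) *: a.
Proof.
rewrite table_ab -[a in mul a _]scale1r !(comb3_uZ a b0 be) table_mul comb3Z comb3D.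
by apply: comb3_congr; ring.
Qed.

Lemma mul_b_ab_relations psi :
  mul b (mul a b) = eta *: mul a b + (psi * (1 - eta)) *: b ->
  [/\ phi * (phi - psi) * (1 - eta) = 0, eta * (1 - nu) = psi * (1 - eta) &
      phi * eta + eta / 2 = eta ^+ 2 + psi * (1 - eta)].
Proof.
rewrite table_ab (table_b T) table_mul !comb3Z comb3D => /table_inj[e1 e2 e3].
split; [apply: (eq_by_scaled_eq (c := 1) e1) | apply: (eq_by_scaled_eq (c := 1) e2)
        | apply: (eq_by_scaled_eq (c := 1) e3)]; ring.
Qed.

End Table.

Lemma table_swap_relations eta phi nu phi' nu' a b b0 be a0 ae : eta != 1 ->
  axis_table eta phi nu a b b0 be -> axis_table eta phi' nu' b a a0 ae ->
  eta * (1 - nu) = phi * (1 - eta) /\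
  phi * eta + eta / 2 = eta ^+ 2 + phi * (1 - eta).
Proof.
move=> eta_neq1 T T'.
have b_ab := mul_a_ab T'; rewrite (mulC b a) in b_ab.
have a_ba := mul_a_ab T; rewrite (mulC a b) in a_ba.
have [r1 _ _] := mul_b_ab_relations T b_ab.
have [r1' _ _] := mul_b_ab_relations T' a_ba.
have phi'E : phi' = phi.
  have : (phi - phi') ^+ 2 * (1 - eta) = 0 by rewrite -(addr0 0) -{1}r1 -r1'; ring.
  move/eqP; rewrite mulf_eq0 expf_eq0 /= !subr_eq0 [1 == _]eq_sym (negPf eta_neq1).
  by rewrite orbF => /eqP ->.
rewrite phi'E in b_ab; have [_ r2 r3] := mul_b_ab_relations T b_ab.
by split.
Qed.

Lemma table_tau_image eta phi nu a b b0 be bt : is_axis mul eta a ->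
  axis_table eta phi nu a b b0 be -> tau_image mul eta a b bt ->
  bt = comb3 a b0 be phi 1 (-1).
Proof.
move=> axis_a T [bp [bm [Abp ebm defb ->]]].
have [<- <-] : phi *: a + b0 = bp /\ be = bm.
  apply: (Aplus_eigen_uniq axis_a) => //.
  - by apply: (Aplus_axis_zero axis_a); rewrite /eigen mulC (table_ab0 T) scale0r.
  - by rewrite /eigen mulC (table_abe T).
  - by rewrite -defb (table_b T) comb3E !scale1r.
by rewrite comb3E scale1r scaleN1r.
Qed.

Section TauImage.
Variables (eta phi nu : F) (a b b0 be bt : A).
Hypothesis T : axis_table eta phi nu a b b0 be.
Hypothesis defbt : bt = comb3 a b0 be phi 1 (-1).
Hypothesis two_neq0 : 2 != 0 :> F.

Local Notation comb := (comb3 a b0 be).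

Lemma mul_b_bt : mul b bt = comb (2 * phi ^+ 2 - phi) (2 * nu - 1) 0.
Proof. by rewrite (table_b T) defbt (table_mul T); apply: comb3_congr; ring. Qed.

Lemma table_bb : mul b b = b.
Proof. by rewrite (table_b T) (table_mul T); apply: comb3_congr; field. Qed.

Lemma table_btbt : mul bt bt = bt.
Proof. by rewrite defbt (table_mul T); apply: comb3_congr; field. Qed.

Lemma N2_b_bt_eq : phi * (nu - phi) != 0 ->
  forall z, N2 mul b bt z <-> N2 mul a b z.
Proof.
move=> nondeg z; split; apply: N2_min; try exact: gen_subalg_closed.
- exact: N2_r.
- by apply/(table_N2 T); rewrite defbt; apply: span3_comb3.
- have SV := gen_subalg_closed mul (fun z => z = b \/ z = bt).
  have [_ VD VZ VM] := SV.
  have -> : a = (2 * phi * (nu - phi))^-1 *: ((nu - 2^-1) *: (b + bt) - mul b bt).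
    move: nondeg; rewrite mulf_eq0 negb_or => /andP[phi_neq0 nu_phi_neq0].
    rewrite mul_b_bt (table_b T) defbt -[a in a = _]scale1r (comb3_uZ a b0 be).
    by rewrite !(comb3Z, comb3D, comb3B); apply: comb3_congr; field;
      rewrite phi_neq0 nu_phi_neq0 two_neq0.
  apply: (VZ); apply: (subalg_closedB SV).
    by apply: (VZ); apply: (VD); [apply: N2_l | apply: N2_r].
  by apply: (VM); [apply: N2_l | apply: N2_r].
- exact: N2_l.
Qed.

Lemma has_dim_N2_b_bt : span_of [:: b; bt] (mul b bt) -> has_dim (N2 mul b bt) 2.
Proof.
move=> /span_of2[k [l bbt]]; exists [:: b; bt]; split=> //.
  apply: lin_free2 => k' l'; rewrite (table_b T) defbt !comb3Z comb3D -(comb30 a b0 be).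
  move=> /(table_inj T)[_ e2 e3].
  split.
    have -> : k' = 2^-1 * ((k' * 1 + l' * 1) + (k' * 1 + l' * (-1))) by field.
    by rewrite e2 e3 addr0 mulr0.
  have -> : l' = 2^-1 * ((k' * 1 + l' * 1) - (k' * 1 + l' * (-1))) by field.
  by rewrite e2 e3 subrr mulr0.
move=> z; split=> [Vz | /span_of2[k' [l' ->]]]; last first.
  apply: (subalg_closed_comb2 (S := N2 mul b bt)); last exact: N2_r.
    exact: gen_subalg_closed.
  exact: N2_l.
apply: span3_w0; apply: N2_min Vz; [apply: span3_subalg_closed | apply: span3_u | apply: span3_v].
- by rewrite table_bb; apply: span3_u.
- by rewrite bbt; apply: span3D; apply/span3Z; [apply: span3_u | apply: span3_v].
- by rewrite mulv0; apply: span30.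
- by rewrite table_btbt; apply: span3_v.
- by rewrite mulv0; apply: span30.
- by rewrite mulv0; apply: span30.
Qed.

Lemma table_identity k : eta = 2^-1 -> nu = 1 - phi -> nu * k = 1 ->
  is_identity mul (N2 mul a b) (comb 1 k 0).
Proof.
move=> etaE nuE nuk; split=> [|n /(table_N2 T)[p [q [r ->]]]].
  by apply/(table_N2 T); apply: span3_comb3.
rewrite (table_mul T); apply: comb3_congr; first by ring.
  by rewrite mulrA nuk; ring.
rewrite etaE; rewrite nuE in nuk.
by apply: (eq_by_scaled_eq (c := r / 2) nuk); field.
Qed.

End TauImage.

Definition outcome_i (a b bt one : A) : Prop :=
  [/\ mul a b = - (2^-1 *: one) + 2^-1 *: a + 2^-1 *: b,
      mul b bt = 2^-1 *: b + 2^-1 *: bt,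
      has_dim (N2 mul b bt) 2 &
      forall z, (span_of [:: b; bt] z /\ span_of [:: one; a] z) <->
                exists k : F, z = k *: (one - a)].

Definition outcome_ii (a b bt one : A) : Prop :=
  [/\ mul a b = - (4^-1 *: one) + 2^-1 *: a + 2^-1 *: b,
      mul b bt = 0,
      has_dim (N2 mul b bt) 2 &
      forall z, (span_of [:: b; bt] z /\ span_of [:: one; a] z) <->
                exists k : F, z = k *: one].

Section Outcomes.
Variables (a b b0 be bt : A).
Hypothesis two_neq0 : 2 != 0 :> F.

Local Notation comb := (comb3 a b0 be).

Let four_neq0 : 4 != 0 :> F.
Proof. by have := mulf_neq0 two_neq0 two_neq0; rewrite -natrM. Qed.

Let a_comb one : [:: one; a] = [:: one; comb 1 0 0].
Proof. by rewrite -comb3_u. Qed.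

Lemma table_outcome_i : axis_table 2^-1 0 1 a b b0 be ->
  bt = comb 0 1 (-1) -> outcome_i a b bt (comb 1 1 0) /\ ~ outcome_ii a b bt (comb 1 1 0).
Proof.
move=> T defbt; have bbt : mul b bt = comb 0 1 0.
  by rewrite (mul_b_bt T defbt); apply: comb3_congr; ring.
split; last first.
  case=> _ + _ _; rewrite bbt -(comb30 a b0 be) => /(table_inj T)[_ /eqP].
  by rewrite oner_eq0.
split.
- rewrite (table_ab T) (comb3_uZ a b0 be) (table_b T).
  by rewrite !(comb3Z, comb3N, comb3D); apply: comb3_congr; field.
- by rewrite bbt (table_b T) defbt !(comb3Z, comb3D); apply: comb3_congr; field.
- apply: (has_dim_N2_b_bt T defbt two_neq0); apply/span_of2; exists 2^-1, 2^-1.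
  by rewrite bbt (table_b T) defbt !(comb3Z, comb3D); apply: comb3_congr; field.
move=> z; rewrite a_comb (table_b T) defbt [a in _ - a](comb3_u a b0 be).
split=> [[/span_of2_comb3[k [l ->]] /span_of2_comb3[m [n e]]] | [k ->]].
  exists m; rewrite e comb3B comb3Z; have [e1 _ _] := table_inj T e.
  by apply: comb3_congr; [apply: (eq_by_scaled_eq (c := -1) e1) | |]; ring.
split; apply/span_of2_comb3; [exists (k / 2), (k / 2) | exists k, (- k)];
  by rewrite comb3B comb3Z; apply: comb3_congr; field.
Qed.

Lemma table_outcome_ii : axis_table 2^-1 2^-1 2^-1 a b b0 be ->
  bt = comb 2^-1 1 (-1) -> ~ outcome_i a b bt (comb 1 2 0) /\ outcome_ii a b bt (comb 1 2 0).
Proof.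
move=> T defbt; have bbt : mul b bt = 0.
  by rewrite (mul_b_bt T defbt) -(comb30 a b0 be); apply: comb3_congr; field.
split.
  case=> _ + _ _; rewrite bbt (table_b T) defbt !(comb3Z, comb3D) -(comb30 a b0 be).
  move=> /(table_inj T)[_ e2 _]; apply: (negP (oner_neq0 F)); apply/eqP.
  by apply: (eq_by_scaled_eq (c := -1) e2); field.
split.
- rewrite (table_ab T) (comb3_uZ a b0 be) (table_b T).
  by rewrite !(comb3Z, comb3N, comb3D); apply: comb3_congr; field;
    rewrite two_neq0 four_neq0.
- exact: bbt.
- by apply: (has_dim_N2_b_bt T defbt two_neq0); rewrite bbt; apply/span_of2; exists 0, 0;
    rewrite !scale0r addr0.
move=> z; rewrite a_comb (table_b T) defbt.
split=> [[/span_of2_comb3[k [l ->]] /span_of2_comb3[m [n e]]] | [k ->]].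
  exists m; rewrite e comb3Z; have [e1 e2 _] := table_inj T e.
  apply: comb3_congr; rewrite ?mulr0 ?addr0 //.
  rewrite -e1 (_ : k / 2 + l / 2 = (k * 1 + l * 1) / 2); last by ring.
  by rewrite e2; field.
split; apply/span_of2_comb3; [exists k, k | exists k, 0];
  by rewrite comb3Z; apply: comb3_congr; field.
Qed.

End Outcomes.

End Algebra.

Unset Implicit Arguments.

Theorem lemma3p11 (F : fieldType) (A : lmodType F) (mul : A -> A -> A)
    (eta : F) (a b bt : A) :
  2 \notin [pchar F] -> eta != 0 -> eta != 1 ->
  primitive_axial_Jordan mul eta ->
  is_axis mul eta a -> is_axis mul eta b -> a != b ->
  has_dim (N2 mul a b) 3 ->
  tau_image mul eta a b bt ->
  (forall z, N2 mul b bt z <-> N2 mul a b z) \/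
  (eta = 2^-1 /\
   exists one : A, is_identity mul (N2 mul a b) one /\
   let P1 :=
     [/\ mul a b = - (2^-1 *: one) + 2^-1 *: a + 2^-1 *: b,
         mul b bt = 2^-1 *: b + 2^-1 *: bt,
         has_dim (N2 mul b bt) 2 &
         forall z, (span_of [:: b; bt] z /\ span_of [:: one; a] z) <->
                   exists k : F, z = k *: (one - a)] in
   let P2 :=
     [/\ mul a b = - (4^-1 *: one) + 2^-1 *: a + 2^-1 *: b,
         mul b bt = 0,
         has_dim (N2 mul b bt) 2 &
         forall z, (span_of [:: b; bt] z /\ span_of [:: one; a] z) <->
                   exists k : F, z = k *: one] in
   (P1 /\ ~ P2) \/ (~ P1 /\ P2)).
Proof.
move=> char2 eta_neq0 eta_neq1 [[mulC mulL] _] axis_a axis_b _ dimN tau.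
have two_neq0 : 2 != 0 :> F by move: char2; rewrite inE.
have [aa bb] : mul a a = a /\ mul b b = b by case: axis_a; case: axis_b.
have [phi [nu [b0 [be T]]]] := axis_table_exists mulC mulL eta_neq0 two_neq0 axis_a bb dimN.
have [phi' [nu' [a0 [ae T']]]] := axis_table_exists mulC mulL eta_neq0 two_neq0 axis_b aa
  (has_dim_ext (N2C mul b a) dimN).
have [rel_nu rel_eta] := table_swap_relations mulC mulL eta_neq1 T T'.
have defbt := table_tau_image mulC mulL axis_a T tau.
have [deg | nondeg] := eqVneq (phi * (nu - phi)) 0; last first.
  by left; apply: (N2_b_bt_eq mulC mulL T defbt two_neq0).
have [etaE nuE [phi0 | phi_half]] :=
  degenerate_parameters eta_neq0 two_neq0 rel_nu rel_eta deg.
all: subst eta phi nu; right; split=> //.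
- rewrite subr0 in T; exists (comb3 a b0 be 1 1 0); split.
    by apply: (table_identity mulC mulL T two_neq0); rewrite ?subr0 ?mulr1.
  cbv zeta; left; exact (table_outcome_i mulC mulL two_neq0 T defbt).
- have half : 1 - 2^-1 = 2^-1 :> F by field.
  rewrite half in T; exists (comb3 a b0 be 1 2 0); split.
    by apply: (table_identity mulC mulL T two_neq0) => //; field.
  cbv zeta; right; exact (table_outcome_ii mulC mulL two_neq0 T defbt).
Qed.
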